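(* Let $\pi\colon\mathsf{States}\to\mathbb{R}_{\ge0}$ be a potential function. For every program $C$ of the heap-manipulating probabilistic guarded command language, $$\mathsf{ert}[\![C]\!](0)\;\preceq\;\mathsf{aert}_\pi[\![C]\!](0)+\pi .$$
   Context: States and programs. Fix a finite set $\mathrm{Vars}$ of variables; values are $\mathbb{N}$, locations are $\mathbb{N}_{>0}$. A stack is $s\colon \mathrm{Vars}\to\mathbb{N}$; a heap is a partial map $h$ from a finite set $\mathrm{dom}(h)\subseteq\mathbb{N}_{>0}$ to $\mathbb{N}$. $h_1\perp h_2$ means disjoint domains; then $h_1\star h_2$ is their union; $h_\emptyset$ is the empty heap. $\mathsf{States}$ is the set of pairs $(s,h)$. $s(e)$ is the value of a (heap-independent) arithmetic expression $e$ under $s$, $s\models\varphi$ means the Boolean expression $\varphi$ holds under $s$, $s[x\mapsto v]$ is the updated stack. Programs are generated by $C ::= \mathtt{tick}(e) \mid x:=e \mid x:=\mathtt{alloc}(e) \mid \langle e\rangle:=e' \mid x:=\langle e\rangle \mid \mathtt{free}(e) \mid \{C\}[p]\{C\} \mid \mathtt{if}(\varphi)\{C\}\mathtt{else}\{C\} \mid C;C \mid \mathtt{while}(\varphi)\{C\}$, where $p$ is an expression with $s(p)\in[0,1]\cap\mathbb{Q}$ for all $s$. The statements other than tick, probabilistic choice, conditional, sequencing and loops are called atomic. Runtimes. $\mathbb{T}$ is the set of functions $\mathsf{States}\to[0,\infty]$, ordered pointwise by $\preceq$; arithmetic is pointwise with $0\cdot\infty=0$; $0$ denotes the constant-zero function.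 $[\varphi]$ is the $0/1$-valued Iverson bracket. Truncated subtraction: $a\dot- b=\max(a-b,0)$, $\infty\dot- b=\infty$ for finite $b$, $a\dot-\infty=0$. $(f\oplus g)(s,h)=\min\{f(s,h_1)+g(s,h_2)\mid h=h_1\star h_2\}$; $(f \mathbin{-\!\!\ominus} g)(s,h)=\sup\{g(s,h\star h')\dot- f(s,h')\mid h'\perp h\}$; $(\inf y\colon f)(s,h)=\inf_{v\in\mathbb{N}} f(s[y\mapsto v],h)$, $(\sup y\colon f)(s,h)=\sup_{v\in\mathbb{N}}f(s[y\mapsto v],h)$; $f[x/e](s,h)=f(s[x\mapsto s(e)],h)$. $\mathsf{tm}(e)(s,h)=s(e)$ if $h=h_\emptyset$, else $\infty$; $[e\mapsto e'](s,h)=0$ if $\mathrm{dom}(h)=\{s(e)\}$ and $h(s(e))=s(e')$, else $\infty$; $[e\mapsto -](s,h)=0$ if $\mathrm{dom}(h)=\{s(e)\}$, else $\infty$; $\bigoplus_{i=1}^{e} f_i$ is the separating sum over $i=1,\dots,s(e)$ (empty one: $[\mathsf{emp}]$, which is $0$ if $h=h_\emptyset$, else $\infty$). $\mathsf{ert}[\![C]\!]\colon\mathbb{T}\to\mathbb{T}$ (with $v$ fresh): $\mathsf{ert}[\![\mathtt{tick}(e)]\!](f)=\mathsf{tm}(e)\oplus f$; $\mathsf{ert}[\![x:=e]\!](f)=f[x/e]$; $\mathsf{ert}[\![x:=\mathtt{alloc}(e)]\!](f)=\sup v\colon (\bigoplus_{i=1}^{e}[v+i-1\mapsto 0])\mathbin{-\!\!\ominus}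 f[x/v]$; $\mathsf{ert}[\![\langle e\rangle:=e']\!](f)=[e\mapsto-]\oplus([e\mapsto e']\mathbin{-\!\!\ominus} f)$; $\mathsf{ert}[\![x:=\langle e\rangle]\!](f)=\inf v\colon [e\mapsto v]\oplus([e\mapsto v]\mathbin{-\!\!\ominus} f[x/v])$; $\mathsf{ert}[\![\mathtt{free}(e)]\!](f)=[e\mapsto-]\oplus f$; $\mathsf{ert}[\![C_1;C_2]\!](f)=\mathsf{ert}[\![C_1]\!](\mathsf{ert}[\![C_2]\!](f))$; conditional: $[\varphi]\cdot\mathsf{ert}[\![C_1]\!](f)+[\neg\varphi]\cdot\mathsf{ert}[\![C_2]\!](f)$; probabilistic choice: $p\cdot\mathsf{ert}[\![C_1]\!](f)+(1-p)\cdot\mathsf{ert}[\![C_2]\!](f)$; $\mathsf{ert}[\![\mathtt{while}(\varphi)\{C\}]\!](f)=\mathrm{lfp}\, g.\ [\neg\varphi]\cdot f+[\varphi]\cdot\mathsf{ert}[\![C]\!](g)$. Amortized runtimes. A potential function is $\pi\colon\mathsf{States}\to\mathbb{R}_{\ge0}$. $\mathbb{A}_\pi=\{X\colon\mathsf{States}\to\mathbb{R}\cup\{\infty\}\mid -\pi\le X\}$, ordered pointwise (complete lattice, least element $-\pi$). $\mathsf{aert}_\pi[\![C]\!]\colon\mathbb{A}_\pi\to\mathbb{A}_\pi$: $\mathsf{aert}_\pi[\![\mathtt{tick}(e)]\!](X)=e+X$; for atomic $C$ other than tick, $\mathsf{aert}_\pi[\![C]\!](X)=\mathsf{ert}[\![C]\!](X+\pi)-\pi$;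 sequencing by composition; conditional $[\varphi]\cdot\mathsf{aert}_\pi[\![C_1]\!](X)+[\neg\varphi]\cdot\mathsf{aert}_\pi[\![C_2]\!](X)$; probabilistic choice $p\cdot\mathsf{aert}_\pi[\![C_1]\!](X)+(1-p)\cdot\mathsf{aert}_\pi[\![C_2]\!](X)$; $\mathsf{aert}_\pi[\![\mathtt{while}(\varphi)\{C'\}]\!](X)=\mathrm{lfp}\,Y.\ [\neg\varphi]\cdot X+[\varphi]\cdot\mathsf{aert}_\pi[\![C']\!](Y)$ in $(\mathbb{A}_\pi,\preceq)$. *)

From HB Require Import structures.
From mathcomp Require Import all_boot all_order all_algebra.
From mathcomp Require Import boolp classical_sets reals constructive_ereal ereal.
Set Implicit Arguments. Unset Strict Implicit. Unset Printing Implicit Defensive.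
Import Order.TTheory GRing.Theory Num.Theory.
Local Open Scope classical_set_scope.
Local Open Scope ring_scope.
Local Open Scope ereal_scope.

Section HPGCL.
Variable V : finType.
Variable R : realType.

Definition stack := V -> nat.

Record heap := Heap {
  hfun :> nat -> option nat;
  hfun0 : hfun 0%N = None;
  hfin : exists n : nat, forall l, (n <= l)%N -> hfun l = None }.

Definition state := (stack * heap)%type.

Definition upd (s : stack) (x : V) (v : nat) : stack :=
  fun y => if y == x then v else s y.

Definition hsplit (h h1 h2 : heap) : Prop :=
  forall l, (h l = h1 l /\ h2 l = None) \/ (h l = h2 l /\ h1 l = None).

Definition aexp := stack -> nat.
Definition bexp := stack -> bool.
Definition pexp := stack -> rat.

Inductive prog :=
| Tick of aexp
| Assign of V & aexp
| Alloc of V & aexp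
| Store of aexp & aexp          (* <e> := e' *)
| Lookup of V & aexp
| Free of aexp
| PChoice (C1 : prog) (p : pexp) (hp : forall s, (0 <= p s <= 1)%R) (C2 : prog)
| Ite of bexp & prog & prog
| Seq of prog & prog
| While of bexp & prog.

Definition rt := state -> \bar R.

Definition tsub (a b : \bar R) : \bar R :=
  if b == +oo then 0 else maxe (a - b) 0.

Definition sepsum (f g : rt) : rt := fun st =>
  ereal_inf [set z | exists h1 h2, hsplit st.2 h1 h2 /\ z = f (st.1, h1) + g (st.1, h2)].

Definition sepimp (f g : rt) : rt := fun st =>
  ereal_sup [set z | exists h' hh, hsplit hh st.2 h' /\
                       z = tsub (g (st.1, hh)) (f (st.1, h'))].

Definition einf_nat (f : nat -> rt) : rt := fun st => ereal_inf [set f v st | v in setT].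
Definition esup_nat (f : nat -> rt) : rt := fun st => ereal_sup [set f v st | v in setT].

Definition subst (f : rt) (x : V) (e : aexp) : rt := fun st => f (upd st.1 x (e st.1), st.2).

Definition emp : rt := fun st => if `[< forall l, st.2 l = None >] then 0 else +oo.

Definition tm (e : aexp) : rt := fun st =>
  if `[< forall l, st.2 l = None >] then ((e st.1)%:R)%:E else +oo.

Definition pto (a v : stack -> nat) : rt := fun st =>
  if `[< forall l, st.2 l = if l == a st.1 then Some (v st.1) else None >] then 0 else +oo.

Definition pto_any (a : stack -> nat) : rt := fun st =>
  if `[< st.2 (a st.1) <> None /\ forall l, l <> a st.1 -> st.2 l = None >] then 0 else +oo.

Fixpoint bigsep_from (i n : nat) (F : nat -> rt) : rt :=
  match n with
  | 0%N => emp
  | n'.+1 => sepsum (F i) (bigsep_from i.+1 n' F)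
  end.

Definition bigsep (e : aexp) (F : nat -> rt) : rt := fun st =>
  bigsep_from 1 (e st.1) F st.

Definition lfpT (Phi : rt -> rt) : rt := fun st =>
  ereal_inf [set g st | g in [set g : rt | (forall t, 0 <= g t) /\
                                            (forall t, Phi g t <= g t)]].

Fixpoint ert (C : prog) (f : rt) : rt :=
  match C with
  | Tick e => sepsum (tm e) f
  | Assign x e => subst f x e
  | Alloc x e => esup_nat (fun v =>
      sepimp (bigsep e (fun i => pto (fun _ => (v + i - 1)%N) (fun _ => 0%N)))
             (subst f x (fun _ => v)))
  | Store e e' => sepsum (pto_any e) (sepimp (pto e e') f)
  | Lookup x e => einf_nat (fun v =>
      sepsum (pto e (fun _ => v)) (sepimp (pto e (fun _ => v)) (subst f x (fun _ => v))))
  | Free e => sepsum (pto_any e) f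
  | PChoice C1 p _ C2 => fun st =>
      (ratr (p st.1))%:E * ert C1 f st + (1 - ratr (p st.1))%:E * ert C2 f st
  | Ite b C1 C2 => fun st => if b st.1 then ert C1 f st else ert C2 f st
  | Seq C1 C2 => ert C1 (ert C2 f)
  | While b C' => lfpT (fun g st => if b st.1 then ert C' g st else f st)
  end.

Definition lfpA (pi : state -> R) (Phi : rt -> rt) : rt := fun st =>
  ereal_inf [set Y st | Y in [set Y : rt | (forall t, - (pi t)%:E <= Y t) /\
                                            (forall t, Phi Y t <= Y t)]].

Fixpoint aert (pi : state -> R) (C : prog) (X : rt) : rt :=
  match C with
  | Tick e => fun st => ((e st.1)%:R)%:E + X st
  | Assign _ _ | Alloc _ _ | Store _ _ | Lookup _ _ | Free _ =>
      fun st => ert C (fun t => X t + (pi t)%:E) st - (pi st)%:E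
  | PChoice C1 p _ C2 => fun st =>
      (ratr (p st.1))%:E * aert pi C1 X st + (1 - ratr (p st.1))%:E * aert pi C2 X st
  | Ite b C1 C2 => fun st => if b st.1 then aert pi C1 X st else aert pi C2 X st
  | Seq C1 C2 => aert pi C1 (aert pi C2 X)
  | While b C' => lfpA pi (fun Y st => if b st.1 then aert pi C' Y st else X st)
  end.

End HPGCL.

(* By structural induction on C, for every X with -pi <= X,
   ert C (X + pi) <= aert_pi C X + pi, and aert_pi C X again lies above -pi.
   Atomic statements satisfy the first inequality with equality by definition
   of aert, ticks because the tick's time is charged on the empty heap,
   probabilistic choice because pi splits as p * pi + (1 - p) * pi, and loops
   because Y |-> Y + pi maps prefixpoints of the amortized loop functional to
   prefixpoints of the ert one.  Taking X = 0 and using monotonicity of ert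
   with 0 <= pi gives the theorem. *)
From mathcomp Require Import all_boot all_order all_algebra.
From mathcomp Require Import boolp classical_sets reals constructive_ereal ereal.
From mathcomp Require Import ring.
Set Implicit Arguments. Unset Strict Implicit. Unset Printing Implicit Defensive.
Import Order.TTheory GRing.Theory Num.Theory.
Local Open Scope ring_scope.
Local Open Scope ereal_scope.

Definition hemp : heap := @Heap (fun _ => None) erefl (ex_intro _ 0%N (fun _ _ => erefl)).

Lemma hsplit_empl (h : heap) : hsplit h hemp h.
Proof. by move=> l; right. Qed.

Lemma hsplit_empr (h : heap) : hsplit h h hemp.
Proof. by move=> l; left. Qed.

Section Runtimes.
Variables (V : finType) (R : realType).

Lemma ratr_itv01 (q : rat) : (0 <= q <= 1)%R -> (0 <= (ratr q : R) <= 1)%R.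
Proof. by rewrite -(rmorph1 (ratr : rat -> R)) ler0q ler_rat. Qed.

Lemma oppe_le_sub (a : \bar R) (c : R) : 0 <= a -> - c%:E <= a - c%:E.
Proof. by move=> a_ge0; rewrite -[leLHS]sub0e leeB. Qed.

Lemma le_subeK (a : \bar R) (c : R) : a <= a - c%:E + c%:E.
Proof. by rewrite subeK. Qed.

Section Convex.
Variables (p : R) (p01 : (0 <= p <= 1)%R).

Let p_ge0 : 0 <= p%:E.
Proof. by rewrite lee_fin; case/andP: p01. Qed.

Let q_ge0 : 0 <= (1 - p)%:E.
Proof. by rewrite lee_fin subr_ge0; case/andP: p01. Qed.

Lemma le_conv {a1 a2 b1 b2 : \bar R} : a1 <= b1 -> a2 <= b2 ->
  p%:E * a1 + (1 - p)%:E * a2 <= p%:E * b1 + (1 - p)%:E * b2.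
Proof. by move=> le1 le2; apply: leeD; apply: lee_wpmul2l. Qed.

Lemma conv_ge (c : R) (b1 b2 : \bar R) : c%:E <= b1 -> c%:E <= b2 ->
  c%:E <= p%:E * b1 + (1 - p)%:E * b2.
Proof.
move=> le1 le2; apply: le_trans _ (le_conv le1 le2).
by rewrite -!EFinM -EFinD; have -> : (p * c + (1 - p) * c = c)%R by ring.
Qed.

Lemma conv_le_addr (c : R) (a1 a2 b1 b2 : \bar R) :
  a1 <= b1 + c%:E -> a2 <= b2 + c%:E ->
  p%:E * a1 + (1 - p)%:E * a2 <= p%:E * b1 + (1 - p)%:E * b2 + c%:E.
Proof.
move=> le1 le2; apply: le_trans (le_conv le1 le2) _.
rewrite !muleDr ?fin_num_adde_defl // addeACA -!EFinM -EFinD.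
by have -> : (p * c + (1 - p) * c = c)%R by ring.
Qed.

End Convex.

Lemma tsub_ge0 (a b : \bar R) : 0 <= tsub a b.
Proof. by rewrite /tsub; case: ifP => // _; rewrite le_max lexx orbT. Qed.

Lemma le_tsubl (a a' b : \bar R) : a <= a' -> tsub a b <= tsub a' b.
Proof. by rewrite /tsub => le_aa'; case: ifP => // _; apply: le_max2 => //; apply: leeB. Qed.

Lemma le_sepsumr (f g h : rt V R) st :
  (forall t, g t <= h t) -> sepsum f g st <= sepsum f h st.
Proof.
move=> le_gh; apply/ereal_infP => _ [h1 [h2 [split12 ->]]].
apply: le_trans (ereal_inf_lbound _) _; first by exists h1, h2.
exact/leeD2l/le_gh.
Qed.

Lemma sepsum_ge0 (f g : rt V R) st :
  (forall t, 0 <= f t) -> (forall t, 0 <= g t) -> 0 <= sepsum f g st.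
Proof. by move=> f_ge0 g_ge0; apply/ereal_infP => _ [h1 [h2 [_ ->]]]; apply: adde_ge0. Qed.

Lemma sepsum_tm_le (e : aexp V) (f : rt V R) st :
  sepsum (@tm V R e) f st <= ((e st.1)%:R)%:E + f st.
Proof.
case: st => s h; apply: ereal_inf_lbound; exists hemp, h; split; first exact: hsplit_empl.
by rewrite /tm asboolT.
Qed.

Lemma le_sepimpr (f g h : rt V R) st :
  (forall t, g t <= h t) -> sepimp f g st <= sepimp f h st.
Proof.
move=> le_gh; apply/ereal_supP => _ [h' [hh [split' ->]]].
apply: le_trans _ (ereal_sup_ubound _); last by exists h', hh.
exact/le_tsubl/le_gh.
Qed.

Lemma sepimp_ge0 (f g : rt V R) st : 0 <= sepimp f g st.
Proof.
apply: le_trans (tsub_ge0 (g st) (f (st.1, hemp))) (ereal_sup_ubound _).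
by exists hemp, st.2; split; [exact: hsplit_empr | case: st].
Qed.

Lemma tm_ge0 e (t : state V) : 0 <= @tm V R e t.
Proof. by rewrite /tm; case: ifP. Qed.

Lemma pto_ge0 a v (t : state V) : 0 <= @pto V R a v t.
Proof. by rewrite /pto; case: ifP. Qed.

Lemma pto_any_ge0 a (t : state V) : 0 <= @pto_any V R a t.
Proof. by rewrite /pto_any; case: ifP. Qed.

Lemma le_lfpT (Phi Psi : rt V R -> rt V R) st :
  (forall g t, Phi g t <= Psi g t) -> lfpT Phi st <= lfpT Psi st.
Proof.
move=> le_PhiPsi; apply/ereal_infP => _ [g [g_ge0 Psi_g] <-].
apply: ereal_inf_lbound; exists g => //; split => // t.
exact: le_trans (Psi_g t).
Qed.

Lemma lfpT_ge0 (Phi : rt V R -> rt V R) st : 0 <= lfpT Phi st.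
Proof. by apply/ereal_infP => _ [g [g_ge0 _] <-]. Qed.

Lemma le_ert (C : prog V) (f g : rt V R) :
  (forall t, f t <= g t) -> forall st, ert C f st <= ert C g st.
Proof.
elim: C f g => [e|x e|x e|e e'|x e|e|C1 IH1 p hp C2 IH2|b C1 IH1 C2 IH2|C1 IH1 C2 IH2|b C IH]
  f g le_fg st /=.
- exact: le_sepsumr.
- exact: le_fg.
- apply/ereal_supP => _ [v _ <-]; apply: le_trans _ (ereal_sup_ubound _); last by exists v.
  by apply: le_sepimpr => t; apply: le_fg.
- by apply: le_sepsumr => t; apply: le_sepimpr.
- apply/ereal_infP => _ [v _ <-]; apply: le_trans (ereal_inf_lbound _) _; first by exists v.
  by apply: le_sepsumr => t; apply: le_sepimpr => t'; apply: le_fg.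
- exact: le_sepsumr.
- by apply: le_conv; [exact/ratr_itv01/hp | exact: IH1 | exact: IH2].
- by case: (b st.1); [apply: IH1 | apply: IH2].
- by apply: IH1 => t; apply: IH2.
- by apply: le_lfpT => h t; case: (b t.1).
Qed.

Lemma ert_ge0 (C : prog V) (f : rt V R) :
  (forall t, 0 <= f t) -> forall st, 0 <= ert C f st.
Proof.
elim: C f => [e|x e|x e|e e'|x e|e|C1 IH1 p hp C2 IH2|b C1 IH1 C2 IH2|C1 IH1 C2 IH2|b C IH]
  f f_ge0 st /=.
- by apply: sepsum_ge0 => // t; apply: tm_ge0.
- exact: f_ge0.
- by apply: le_trans (sepimp_ge0 _ _ st) (ereal_sup_ubound _); exists 0%N.
- by apply: sepsum_ge0 => t; [exact: pto_any_ge0 | exact: sepimp_ge0].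
- apply/ereal_infP => _ [v _ <-].
  by apply: sepsum_ge0 => t; [exact: pto_ge0 | exact: sepimp_ge0].
- by apply: sepsum_ge0 => // t; apply: pto_any_ge0.
- by apply: conv_ge; [exact/ratr_itv01/hp | exact: IH1 | exact: IH2].
- by case: (b st.1); [apply: IH1 | apply: IH2].
- by apply: IH1 => t; apply: IH2.
- exact: lfpT_ge0.
Qed.

Section Potential.
Variable pi : state V -> R.

Definition pot_bounded (X : rt V R) := forall t, - (pi t)%:E <= X t.

Definition addpot (X : rt V R) : rt V R := fun t => X t + (pi t)%:E.

Lemma addpot_ge0 {X : rt V R} : pot_bounded X -> forall t, 0 <= addpot X t.
Proof. by move=> X_pb t; rewrite -leeBlDr // sub0e. Qed.

Lemma lfpA_pot_bounded (Phi : rt V R -> rt V R) : pot_bounded (lfpA pi Phi).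
Proof. by move=> st; apply/ereal_infP => _ [Y [Y_pb _] <-]. Qed.

Lemma lfpT_addpot_le_lfpA (Phi Psi : rt V R -> rt V R) :
  (forall Y, pot_bounded Y -> forall t, Phi (addpot Y) t <= Psi Y t + (pi t)%:E) ->
  forall st, lfpT Phi st <= lfpA pi Psi st + (pi st)%:E.
Proof.
move=> Phi_Psi st; rewrite -leeBlDr //; apply/ereal_infP => _ [Y [Y_pb Psi_Y] <-].
rewrite leeBlDr //; apply: ereal_inf_lbound; exists (addpot Y) => //; split.
  exact: addpot_ge0.
by move=> t; apply: le_trans (Phi_Psi Y Y_pb t) _; apply: leeD2r.
Qed.

Lemma aert_pot_bounded (C : prog V) {X : rt V R} :
  pot_bounded X -> pot_bounded (aert pi C X).
Proof.
elim: C X => [e|x e|x e|e e'|x e|e|C1 IH1 p hp C2 IH2|b C1 IH1 C2 IH2|C1 IH1 C2 IH2|b C IH]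
  X X_pb st; try exact: oppe_le_sub (ert_ge0 _ (addpot_ge0 X_pb) _).
- by apply: le_trans (X_pb st) _; rewrite leeDr // lee_fin.
- rewrite /=; apply: conv_ge.
  + exact/ratr_itv01/hp.
  + exact: IH1.
  + exact: IH2.
- by rewrite /=; case: (b st.1); [apply: IH1 | apply: IH2].
- exact/IH1/IH2.
- exact: lfpA_pot_bounded.
Qed.

Lemma ert_addpot_le_aert (C : prog V) (X : rt V R) : pot_bounded X ->
  forall st, ert C (addpot X) st <= aert pi C X st + (pi st)%:E.
Proof.
elim: C X => [e|x e|x e|e e'|x e|e|C1 IH1 p hp C2 IH2|b C1 IH1 C2 IH2|C1 IH1 C2 IH2|b C IH]
  X X_pb st; try exact: le_subeK.
- by rewrite /= -addeA; apply: sepsum_tm_le.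
- by apply: conv_le_addr; [exact/ratr_itv01/hp | exact: IH1 | exact: IH2].
- by rewrite /=; case: (b st.1); [apply: IH1 | apply: IH2].
- apply: le_trans (IH1 _ (aert_pot_bounded C2 X_pb) st).
  exact/le_ert/IH2.
- rewrite /=; apply: lfpT_addpot_le_lfpA => Y Y_pb t /=.
  by case: (b t.1); [exact: IH | exact: lexx].
Qed.

End Potential.

End Runtimes.

Theorem mainTheorem2 (V : finType) (R : realType) (pi : state V -> R)
    (pi_ge0 : forall st, (0 <= pi st)%R) (C : prog V) (st : state V) :
  ert C (fun _ => 0) st <= aert pi C (fun _ => 0) st + (pi st)%:E.
Proof.
have zero_pb : pot_bounded pi (fun _ => 0).
  by move=> t; rewrite -EFinN lee_fin oppr_le0.
have zero_le_pot : forall t, 0 <= addpot pi (fun _ => 0) t.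
  by move=> t; rewrite /addpot add0e lee_fin.
exact: le_trans (le_ert C zero_le_pot st) (ert_addpot_le_aert C zero_pb st).
Qed.
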